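(* Let $M$ be a $0/1$-matrix, let $B$ be a block of $M$, and let $i,j$ be two entries of the input boundary $B^-$ with $j>i$ in the input-boundary order, each of which reaches at least one entry of the output boundary $B^+$. Then $\sigma_A(j)\ge\sigma_A(i)$ and $\sigma_Z(j)\ge\sigma_Z(i)$ (in the output-boundary order).
   Context: Let $M$ be an $m\times n$ $0/1$-matrix with entries indexed $(r,s)$ (rows increasing from bottom to top, columns from left to right). A path from $(k,l)$ to $(i,j)$ is a sequence of $1$-entries starting at $(k,l)$ and ending at $(i,j)$ in which each step goes from $(r,s)$ to $(r+1,s)$, $(r,s+1)$ or $(r+1,s+1)$; $(i,j)$ is reachable from $(k,l)$ if such a path exists. A block $B$ is the submatrix formed by rows $r^-\le r\le r^+$ and columns $s^-\le s\le s^+$. Its input boundary $B^-$ consists of the entries in row $r^-$ or column $s^-$ of $B$, ordered: first row $r^-$ from column $s^+$ down to $s^-$, then the remaining entries of column $s^-$ from row $r^-+1$ up to $r^+$. Its output boundary $B^+$ consists of the entries in row $r^+$ or column $s^+$ of $B$, ordered: first column $s^+$ from row $r^-$ up to $r^+$, then the remaining entries of row $r^+$ from column $s^+-1$ down to $s^-$. For an entry $i\in B^-$, $\sigma_A(i)$ and $\sigma_Z(i)$ denote the first and the last entry of $B^+$ (in the output-boundary order) that is reachable from $i$. *)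

From mathcomp Require Import all_boot all_order all_algebra.
Set Implicit Arguments. Unset Strict Implicit. Unset Printing Implicit Defensive.

(* Entries of an m x n 0/1-matrix M : 'M[bool]_(m,n) are pairs (r, s) :
   'I_m * 'I_n; row index r increases from bottom to top, column index s
   from left to right. *)
Definition entry (m n : nat) := ('I_m * 'I_n)%type.

Section Reach.
Variables (m n : nat) (M : 'M[bool]_(m, n)).

Definition one (p : entry m n) : bool := M p.1 p.2.

Definition step (p q : entry m n) : bool :=
  [|| (val q.1 == (val p.1).+1) && (val q.2 == val p.2),
      (val q.1 == val p.1) && (val q.2 == (val p.2).+1)
    | (val q.1 == (val p.1).+1) && (val q.2 == (val p.2).+1)].

Definition step1 (p q : entry m n) : bool := step p q && one q.

Definition reachable (a b : entry m n) : bool := one a && connect step1 a b.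

(* Block with rows rlo <= r <= rhi and columns slo <= s <= shi. *)
Variables (rlo rhi : 'I_m) (slo shi : 'I_n).

Definition in_boundary : seq (entry m n) :=
  [seq (rlo, s) | s <- [seq s : 'I_n <- rev (enum 'I_n) | (slo <= s <= shi)%N]]
  ++ [seq (r, slo) | r <- [seq r : 'I_m <- enum 'I_m | (rlo < r <= rhi)%N]].

Definition out_boundary : seq (entry m n) :=
  [seq (r, shi) | r <- [seq r : 'I_m <- enum 'I_m | (rlo <= r <= rhi)%N]]
  ++ [seq (rhi, s) | s <- [seq s : 'I_n <- rev (enum 'I_n) | (slo <= s < shi)%N]].

Definition sigmaA (i : entry m n) : entry m n :=
  head i [seq o <- out_boundary | reachable i o].
Definition sigmaZ (i : entry m n) : entry m n :=
  last i [seq o <- out_boundary | reachable i o].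

End Reach.

(* Both boundaries of a block run monotonically from south-east to north-west,
   and paths of 1-entries are monotone lattice paths with unit steps.  If i
   precedes j on the input boundary while j reaches an output entry b that
   precedes an output entry a reached from i, the path from j starts weakly
   north-west of the path from i and ends weakly south-east of it, so the two
   paths share an entry.  Hence i reaches b and j reaches a; this exchange
   property makes both the first and the last reachable output entry monotone. *)

From mathcomp Require Import all_boot all_order all_algebra.
From mathcomp Require Import zify.

Set Implicit Arguments.
Unset Strict Implicit.
Unset Printing Implicit Defensive.

Lemma sorted_enum_ord k : sorted (fun i j : 'I_k => (i < j)%N) (enum 'I_k).
Proof. by rewrite -(sorted_map (f := val) (e' := ltn)) val_enum_ord iota_ltn_sorted. Qed.

Lemma sorted_cat_allrel (T : Type) (r : rel T) (s1 s2 : seq T) :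
  transitive r -> sorted r s1 -> sorted r s2 -> allrel r s1 s2 ->
  sorted r (s1 ++ s2).
Proof. by move=> r_tr; rewrite !(sorted_pairwise r_tr) pairwise_cat => -> -> ->. Qed.

Lemma connect_last (T : finType) (e : rel T) x p y :
  path e x p -> y \in x :: p -> connect e y (last x p).
Proof.
move=> + y_xp; case/splitPl: p / y_xp => p1 p2 <-.
rewrite cat_path last_cat => /andP[_ p2P].
by apply/connectP; exists p2.
Qed.

Section FilterIndex.
Variable T : eqType.

Lemma head_filter_mem x0 (p : pred T) s :
  has p s -> head x0 (filter p s) \in filter p s.
Proof. by rewrite has_filter; case: (filter p s) => //= y t _; apply: mem_head. Qed.

Lemma last_filter_mem x0 (p : pred T) s :
  has p s -> last x0 (filter p s) \in filter p s.
Proof. by rewrite has_filter; case: (filter p s) => //= y t _; apply: mem_last. Qed.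

Lemma index_head_filter_le x0 (p : pred T) s o :
  o \in s -> p o -> (index (head x0 (filter p s)) s <= index o s)%N.
Proof.
elim: s => // y t IH o_yt po /=; case py: (p y) => /=; first by rewrite eqxx.
have neq_yo : (y == o) = false by apply: contraFF py => /eqP->.
have ot : o \in t by move: o_yt; rewrite inE eq_sym neq_yo.
by rewrite neq_yo; case: ifP => // _; rewrite ltnS IH.
Qed.

Lemma index_last_filter_ge x0 (p : pred T) s o :
  uniq s -> o \in s -> p o -> (index o s <= index (last x0 (filter p s)) s)%N.
Proof.
elim: s => // y t IH /= /andP[yNt t_uniq]; rewrite inE.
case: eqVneq => [<- //|_] /= ot po.
have has_t : has p t by apply/hasP; exists o.
have := last_filter_mem x0 has_t; rewrite mem_filter => /andP[_ lt].
have -> : last x0 (if p y then y :: filter p t else filter p t)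
          = last x0 (filter p t).
  by move: has_t; rewrite has_filter; case: (p y); case: (filter p t).
by rewrite ifN ?ltnS ?IH //; apply: contraNneq yNt => ->.
Qed.

Variables (s : seq T) (p q : pred T).
Hypothesis exchange : {in s &, forall a b,
  p a -> q b -> (index b s < index a s)%N -> p b && q a}.

Lemma index_head_filter_exchange x0 y0 :
  has p s -> has q s ->
  (index (head x0 (filter p s)) s <= index (head y0 (filter q s)) s)%N.
Proof.
move=> has_p has_q; rewrite leqNgt; apply/negP => lt_ba.
have := head_filter_mem x0 has_p; rewrite mem_filter => /andP[pa sa].
have := head_filter_mem y0 has_q; rewrite mem_filter => /andP[qb sb].
have /andP[pb _] := exchange sa sb pa qb lt_ba.
by have := index_head_filter_le x0 sb pb; rewrite leqNgt lt_ba.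
Qed.

Lemma index_last_filter_exchange x0 y0 :
  uniq s -> has p s -> has q s ->
  (index (last x0 (filter p s)) s <= index (last y0 (filter q s)) s)%N.
Proof.
move=> s_uniq has_p has_q; rewrite leqNgt; apply/negP => lt_ba.
have := last_filter_mem x0 has_p; rewrite mem_filter => /andP[pa sa].
have := last_filter_mem y0 has_q; rewrite mem_filter => /andP[qb sb].
have /andP[_ qa] := exchange sa sb pa qb lt_ba.
by have := index_last_filter_ge y0 s_uniq sa qa; rewrite leqNgt lt_ba.
Qed.

End FilterIndex.

Section NorthWestOrder.
Variables m n : nat.

(* [nw_le p q]: q lies weakly north-west of p (rows grow northwards). *)
Definition nw_le (p q : entry m n) : bool := (p.1 <= q.1) && (q.2 <= p.2).
Definition nw_lt (p q : entry m n) : bool :=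
  nw_le p q && ((p.1 < q.1) || (q.2 < p.2)).

Lemma nw_le_anti (p q : entry m n) : nw_le p q -> nw_le q p -> p = q.
Proof.
case: p q => [r s] [r' s'] /andP[? ?] /andP[? ?].
by congr pair; apply: val_inj; apply/eqP; rewrite eqn_leq; apply/andP.
Qed.

Lemma nw_ltW (p q : entry m n) : nw_lt p q -> nw_le p q.
Proof. by case/andP. Qed.

Lemma nw_lt_trans : transitive nw_lt.
Proof. by move=> q p r; rewrite /nw_lt /nw_le; lia. Qed.

Lemma nw_lt_irr : irreflexive nw_lt.
Proof. by move=> p; rewrite /nw_lt /nw_le; lia. Qed.

Lemma sorted_nw_row r0 (P : pred 'I_n) :
  sorted nw_lt [seq (r0, s) | s <- [seq s <- rev (enum 'I_n) | P s]].
Proof.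
rewrite sorted_map; apply: sorted_filter; first by move=> ? ? ?; apply: nw_lt_trans.
rewrite rev_sorted; apply: sub_sorted (sorted_enum_ord n) => s s'.
by rewrite /relpre /nw_lt /nw_le /=; lia.
Qed.

Lemma sorted_nw_col s0 (P : pred 'I_m) :
  sorted nw_lt [seq (r, s0) | r <- [seq r <- enum 'I_m | P r]].
Proof.
rewrite sorted_map; apply: sorted_filter; first by move=> ? ? ?; apply: nw_lt_trans.
apply: sub_sorted (sorted_enum_ord m) => r r'.
by rewrite /relpre /nw_lt /nw_le /=; lia.
Qed.

Lemma sorted_nw_index s : sorted nw_lt s ->
  {in s &, forall p q, (index p s < index q s)%N -> nw_le p q}.
Proof.
by move=> s_sorted p q ps qs /(sorted_ltn_index nw_lt_trans s_sorted p q ps qs)/nw_ltW.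
Qed.

Variables (rlo rhi : 'I_m) (slo shi : 'I_n).

Lemma sorted_in_boundary : sorted nw_lt (in_boundary rlo rhi slo shi).
Proof.
apply: sorted_cat_allrel (sorted_nw_row _ _) (sorted_nw_col _ _) _; first exact: nw_lt_trans.
apply/allrelP => _ _ /mapP[s + ->] /mapP[r + ->].
by rewrite !mem_filter /nw_lt /nw_le /=; lia.
Qed.

Lemma sorted_out_boundary : sorted nw_lt (out_boundary rlo rhi slo shi).
Proof.
apply: sorted_cat_allrel (sorted_nw_col _ _) (sorted_nw_row _ _) _; first exact: nw_lt_trans.
apply/allrelP => _ _ /mapP[r + ->] /mapP[s + ->].
by rewrite !mem_filter /nw_lt /nw_le /=; lia.
Qed.

End NorthWestOrder.

Section MonotonePaths.
Variables (m n : nat) (M : 'M[bool]_(m, n)).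
Local Notation e := (step1 M).

Lemma step1_bounds (p q : entry m n) : e p q ->
  [/\ p.1 <= q.1 <= (p.1).+1, p.2 <= q.2 <= (p.2).+1 & (p.1 < q.1) || (p.2 < q.2)].
Proof.
case: p q => [[r ?] [s ?]] [[r' ?] [s' ?]] /andP[+ _]; rewrite /step /=.
by case/or3P=> /andP[/eqP-> /eqP->]; split; lia.
Qed.

Lemma path_step1_ge x P (z : entry m n) : path e x P -> z \in x :: P ->
  x.1 <= z.1 /\ x.2 <= z.2.
Proof.
elim: P x => [|y P IH] x /=; first by move=> _; rewrite inE => /eqP ->.
case/andP=> /step1_bounds[? ? _] yP; rewrite inE => /predU1P[-> //|zP].
by have [? ?] := IH y yP zP; lia.
Qed.

Lemma path_step1_row (x : entry m n) P (r : nat) :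
  path e x P -> x.1 <= r <= (last x P).1 -> exists2 p, p \in x :: P & p.1 = r :> nat.
Proof.
elim: P x => [|y P IH] x /=; first by move=> _ ?; exists x; rewrite ?mem_head //; lia.
case/andP=> /step1_bounds[? _ _] yP ?; have [?|?] := ltnP x.1 r.
  by have [p pP <-] := IH y yP ltac:(lia); exists p; rewrite // inE pP orbT.
by exists x; rewrite ?mem_head //; lia.
Qed.

Lemma path_step1_nw_convex (x p1 p2 q : entry m n) P : path e x P ->
  p1 \in x :: P -> p2 \in x :: P -> nw_le p1 q -> nw_le q p2 -> q \in x :: P.
Proof.
elim: P x p1 p2 => [|y P IH] x p1 p2 xP.
  by rewrite !inE => /eqP-> /eqP-> le_xq le_qx; rewrite (nw_le_anti le_qx le_xq).
move: (xP) => /= /andP[/step1_bounds[? ? _] yP].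
have x_min (z : entry m n) : z \in y :: P -> x.1 <= z.1 /\ x.2 <= z.2.
  by move=> zP; apply: path_step1_ge xP _; rewrite inE zP orbT.
rewrite inE => /predU1P[->|p1P]; rewrite inE => /predU1P[->|p2P].
- by move=> le_xq le_qx; rewrite (nw_le_anti le_qx le_xq) mem_head.
- move=> le_xq le_qp2; have [_ ?] := x_min p2 p2P.
  have [?|?] := leqP q.1 x.1.
    rewrite (@nw_le_anti _ _ q x) ?mem_head //.
    by move: le_xq le_qp2; rewrite /nw_le; lia.
  by rewrite inE (IH y y p2) ?mem_head ?orbT //; move: le_xq; rewrite /nw_le; lia.
- move=> le_p1q le_qx; have [? _] := x_min p1 p1P.
  have [?|?] := leqP q.2 x.2.
    rewrite (@nw_le_anti _ _ q x) ?mem_head //.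
    by move: le_p1q le_qx; rewrite /nw_le; lia.
  by rewrite inE (IH y p1 y) ?mem_head ?orbT //; move: le_qx; rewrite /nw_le; lia.
- by move=> le_p1q le_qp2; rewrite inE (IH y p1 p2) ?orbT.
Qed.

(* Discrete intermediate value argument along Q: an entry of Q with an entry of
   P weakly south-east of it but none weakly north-west passes the first
   property on to its successor, and an entry with both lies on P. *)
Lemma step1_paths_meet (x y : entry m n) P Q : path e x P -> path e y Q ->
  x.1 <= y.1 -> (last y Q).1 <= (last x P).1 ->
  has (fun p => nw_le p y) (x :: P) -> has (nw_le (last y Q)) (x :: P) ->
  exists2 c, c \in x :: P & c \in y :: Q.
Proof.
move=> xP; have on_P (z : entry m n) :
    has (fun p => nw_le p z) (x :: P) -> has (nw_le z) (x :: P) -> z \in x :: P.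
  by case/hasP=> p1 p1P ? /hasP[p2 p2P ?]; apply: path_step1_nw_convex xP p1P p2P _ _.
elim: Q y => [|z Q IH] y yQ le_xy /= le_last SE_y NW_last.
  by exists y; rewrite ?on_P ?mem_head.
have [NW_y|/hasPn NNW_y] := boolP (has (nw_le y) (x :: P)).
  by exists y; rewrite ?on_P ?mem_head.
have [/step1_bounds[? ? _] zQ] := andP yQ.
have [? _] := path_step1_ge (z := last z Q) zQ (mem_last _ _).
have [|p pP row_p] := path_step1_row (r := y.1) xP; first lia.
have SE_z : has (fun p => nw_le p z) (x :: P).
  apply/hasP; exists p => //; move: (NNW_y p pP).
  by rewrite /nw_le row_p; lia.
have [|c cP cQ] := IH z zQ _ le_last SE_z NW_last; first lia.
by exists c; rewrite // inE cQ orbT.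
Qed.

Lemma reachable_cross (i j a b : entry m n) :
  reachable M i a -> reachable M j b -> nw_le i j -> nw_le b a ->
  reachable M i b && reachable M j a.
Proof.
case/andP=> one_i /connectP[P iP ->]; case/andP=> one_j /connectP[Q jQ ->].
move=> le_ij le_ba; have [[row_ij _] [row_ba _]] := (andP le_ij, andP le_ba).
have SE_j : has (fun p => nw_le p j) (i :: P) by apply/hasP; exists i; rewrite ?mem_head.
have NW_b : has (nw_le (last j Q)) (i :: P) by apply/hasP; exists (last i P); rewrite ?mem_last.
have [c cP cQ] := step1_paths_meet iP jQ row_ij row_ba SE_j NW_b.
rewrite /reachable one_i one_j.
by rewrite (connect_trans (path_connect iP cP) (connect_last jQ cQ))
           (connect_trans (path_connect jQ cQ) (connect_last iP cP)).
Qed.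

End MonotonePaths.

Theorem corollary2 (m n : nat) (M : 'M[bool]_(m, n))
  (rlo rhi : 'I_m) (slo shi : 'I_n) (i j : entry m n) :
  (rlo <= rhi)%N -> (slo <= shi)%N ->
  i \in in_boundary rlo rhi slo shi ->
  j \in in_boundary rlo rhi slo shi ->
  (index i (in_boundary rlo rhi slo shi) < index j (in_boundary rlo rhi slo shi))%N ->
  has (reachable M i) (out_boundary rlo rhi slo shi) ->
  has (reachable M j) (out_boundary rlo rhi slo shi) ->
  (index (sigmaA M rlo rhi slo shi i) (out_boundary rlo rhi slo shi)
     <= index (sigmaA M rlo rhi slo shi j) (out_boundary rlo rhi slo shi))%N /\
  (index (sigmaZ M rlo rhi slo shi i) (out_boundary rlo rhi slo shi)
     <= index (sigmaZ M rlo rhi slo shi j) (out_boundary rlo rhi slo shi))%N.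
Proof.
move=> _ _ iB jB lt_ij has_i has_j.
set O := out_boundary rlo rhi slo shi.
have O_sorted : sorted (@nw_lt m n) O := sorted_out_boundary rlo rhi slo shi.
have le_ij : nw_le i j := sorted_nw_index (sorted_in_boundary _ _ _ _) iB jB lt_ij.
have exchange : {in O &, forall a b, reachable M i a -> reachable M j b ->
    (index b O < index a O)%N -> reachable M i b && reachable M j a}.
  move=> a b aO bO ia jb lt_ba.
  exact: reachable_cross ia jb le_ij (sorted_nw_index O_sorted bO aO lt_ba).
split; first exact: (index_head_filter_exchange exchange i j has_i has_j).
apply: (index_last_filter_exchange exchange i j _ has_i has_j).
exact: sorted_uniq (@nw_lt_trans m n) (@nw_lt_irr m n) _ O_sorted.
Qed.
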